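(* A finite simple graph $G=(V,E)$ with at least one edge is uniformly dense if and only if $c(E\setminus A)-c(E)\le |A|/\rho(G)$ for all proper subsets $A\subsetneq E$.
   Context: For $A\subseteq E$, $c(A)$ is the number of connected components of the graph $(V,A)$, $\operatorname{rank}(A)=|V|-c(A)$, $\rho(A)=|A|/\operatorname{rank}(A)$ for nonempty $A$, and $\rho(G)=\rho(E)$. $G$ is uniformly dense if $\rho(A)\le\rho(G)$ for all nonempty $A\subseteq E$. *)

(* A finite simple graph G = (V,E) is given by a finite vertex
   type T (V = all of T) and an edge set E : {set {set T}} whose elements are
   2-element subsets of T. *)
From mathcomp Require Import all_boot all_order all_algebra.
Set Implicit Arguments. Unset Strict Implicit. Unset Printing Implicit Defensive.
Import Order.TTheory GRing.Theory Num.Theory.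

Section Graphs.
Variable T : finType.

Definition simple_edges (E : {set {set T}}) : Prop :=
  forall f, f \in E -> #|f| = 2.

Definition adj (A : {set {set T}}) : rel T :=
  fun x y => (x != y) && ([set x; y] \in A).

Definition ncomp (A : {set {set T}}) : nat :=
  n_comp (connect (adj A)) [set: T].

Definition grank (A : {set {set T}}) : nat := #|T| - ncomp A.

Definition rho (A : {set {set T}}) : rat := (#|A|%:R / (grank A)%:R)%R.

Definition uniformly_dense (E : {set {set T}}) : Prop :=
  forall A : {set {set T}}, A \subset E -> A != set0 -> (rho A <= rho E)%R.

End Graphs.

From mathcomp Require Import all_boot all_order all_algebra.
Import Order.TTheory GRing.Theory Num.Theory.
From mathcomp Require Import lra.

(* For nonempty B ⊆ E, rank E - rank B = c(B) - c(E) and |E| - |B| = |E \ B|,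
   so rho(B) <= rho(E) rearranges to c(B) - c(E) <= |E \ B| / rho(E); rank B > 0
   because B contains an edge.  As B ranges over the nonempty subsets of E, its
   complement A = E \ B ranges over the proper subsets of E. *)

Lemma n_comp_lt_card {T : finType} (e : rel T) (x y : T) :
  connect_sym e -> x != y -> connect e x y -> n_comp e [set: T] < #|T|.
Proof.
move=> sym_e neq_xy cxy.
have root_xy : fingraph.root e x = fingraph.root e y.
  by apply/eqP; rewrite root_connect.
set P := predI (roots e) (mem [set: T]).
have [z Pz] : exists z, z \notin P.
  have [/eqP root_x | not_root_x] := boolP (roots e x).
    by exists y; rewrite inE /= /roots -root_xy root_x (negbTE neq_xy).
  by exists x; rewrite inE /= (negbTE not_root_x).
rewrite /n_comp_mem -/P -(cardC P) -[X in X < _]addn0 ltn_add2l.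
by apply/card_gt0P; exists z; rewrite inE.
Qed.

Lemma grank_gt0 {T : finType} (A : {set {set T}}) :
  simple_edges A -> A != set0 -> 0 < grank A.
Proof.
move=> simA /set0Pn [f fA].
have /cards2P [x [y [neq_xy def_f]]] : #|f| == 2 by rewrite simA.
have connect_sym_adj : connect_sym (adj A).
  by apply: sym_connect_sym => u v; rewrite /adj eq_sym setUC.
rewrite subn_gt0 /ncomp.
apply: (@n_comp_lt_card _ _ x y).
- exact: sym_connect_sym connect_sym_adj.
- exact: neq_xy.
- by apply/connect1/connect1; rewrite /adj neq_xy -def_f.
Qed.

Local Open Scope ring_scope.

Lemma ler_ratio_deficit {R : realFieldType} (b e rb re : R) :
  0 < rb -> 0 < re -> 0 < e ->
  (b / rb <= e / re) = (re - rb <= (e - b) / (e / re)).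
Proof.
move=> rb_gt0 re_gt0 e_gt0.
rewrite ler_pdivrMr // mulrAC ler_pdivlMr // invf_div mulrA ler_pdivlMr //.
by apply/idP/idP => h; nra.
Qed.

Lemma rho_le_rhoE {T : finType} {E B : {set {set T}}} :
  simple_edges E -> E != set0 -> B \subset E -> B != set0 ->
  (rho B <= rho E) = ((ncomp B)%:R - (ncomp E)%:R <= #|E :\: B|%:R / rho E).
Proof.
move=> simE nE sBE nB.
have simB : simple_edges B by move=> f /(subsetP sBE); apply: simE.
have rankB := grank_gt0 B simB nB; have rankE := grank_gt0 E simE nE.
have card_EB : #|E :\: B| = (#|E| - #|B|)%N by rewrite cardsD (setIidPr sBE).
have rank_diff : (ncomp B)%:R - (ncomp E)%:R = (grank E)%:R - (grank B)%:R :> rat.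
  by rewrite /grank !natrB ?max_card //; lra.
by rewrite card_EB natrB ?subset_leq_card // rank_diff /rho
  ler_ratio_deficit // ltr0n ?card_gt0.
Qed.

Lemma properEsetD {T : finType} {A E : {set T}} :
  A \subset E -> (A \proper E) = (E :\: A != set0).
Proof. by move=> sAE; rewrite properE sAE setD_eq0. Qed.

Lemma setDDK {T : finType} {A E : {set T}} : A \subset E -> E :\: (E :\: A) = A.
Proof. by move=> sAE; rewrite setDDr setDv set0U; apply/setIidPr. Qed.

Theorem proposition3p12 (T : finType) (E : {set {set T}})
  (hsimple : simple_edges E) (hne : E != set0) :
  uniformly_dense E <->
  (forall A : {set {set T}}, A \proper E ->
     ((ncomp (E :\: A))%:R - (ncomp E)%:R : rat) <= #|A|%:R / rho E).
Proof.
split=> [dense A pAE | bound B sBE nB].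
- have sAE := proper_sub pAE.
  have nEA : E :\: A != set0 by rewrite -(properEsetD sAE).
  rewrite -{2}(setDDK sAE) -rho_le_rhoE ?subsetDl //.
  by apply: dense; rewrite ?subsetDl.
- rewrite (rho_le_rhoE hsimple hne sBE nB) -{1}(setDDK sBE); apply: bound.
  by rewrite (properEsetD (subsetDl _ _)) setDDK.
Qed.
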